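(* Let $G$ be a $\lambda$-graph and $Q$ a query over $G$. Then $Q^{\#}$ is a sharing equivalence if and only if there exists a sharing equivalence on the nodes of $G$ containing $Q$.
   Context: A pre-$\lambda$-graph is a directed graph whose nodes are of four kinds: an application node $@(n_1,n_2)$ has exactly two children, its left child $n_1$ and its right child $n_2$; an abstraction node $\lambda(n)$ has exactly one child, its body $n$; a free variable node has no children and carries an atom $\mathrm{id}(n)$ from a fixed set of atoms, distinct free variable nodes carrying distinct atoms; a bound variable node $\mathrm{var}(l)$ has exactly one outgoing binding edge, to an abstraction node $l$ (its binder). A trace is a finite sequence of directions from $\{\swarrow,\downarrow,\searrow\}$; $\epsilon$ is the empty trace and $d\cdot\tau$ is the trace $\tau$ extended by one final step $d$. Paths $n\xrightarrow{\tau}m$ are defined inductively: $n\xrightarrow{\epsilon}n$; if $n\xrightarrow{\tau}\lambda(m)$ then $n\xrightarrow{\downarrow\cdot\tau}m$; if $n\xrightarrow{\tau}@(m_1,m_2)$ then $n\xrightarrow{\swarrow\cdot\tau}m_1$ and $n\xrightarrow{\searrow\cdot\tau}m_2$ (binding edges are never followed). The path $n\xrightarrow{\tau}$ crosses a node $m$ if either $n\xrightarrow{\tau}m$, or $\tau=d\cdot\tau'$ and $n\xrightarrow{\tau'}$ crosses $m$. A root is a node $r$ such that the only path ending in $r$ has the empty trace. A node $m$ dominates $n$ if every path from a root to $n$ crosses $m$. A $\lambda$-graph is a pre-$\lambda$-graph that has finitely many nodes, is acyclic ($n\xrightarrow{\tau}n$ holds only for $\tau=\epsilon$), and is dominated (every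 bound variable node $\mathrm{var}(l)$ is dominated by its binder $l$). Two nodes are homogeneous if both are application nodes, or both abstraction nodes, or both free variable nodes, or both bound variable nodes; a binary relation $R$ on nodes is homogeneous if it only relates homogeneous nodes. Rules: $(\swarrow)$: $@(n_1,n_2)\,R\,@(m_1,m_2)$ implies $n_1\,R\,m_1$; $(\searrow)$: $@(n_1,n_2)\,R\,@(m_1,m_2)$ implies $n_2\,R\,m_2$; $(\downarrow)$: $\lambda(n)\,R\,\lambda(m)$ implies $n\,R\,m$; $(\circlearrowright)$: $\mathrm{var}(n)\,R\,\mathrm{var}(m)$ implies $n\,R\,m$. $R$ is propagated if closed under $(\swarrow),(\downarrow),(\searrow)$. $R$ is open if $n\,R\,m$ implies $n=m$ for all free variable nodes $n,m$. A bisimulation is a homogeneous propagated relation closed also under $(\circlearrowright)$. A sharing equivalence is an open bisimulation that is an equivalence relation. $R^{\#}$ (spreading) is the smallest propagated equivalence relation containing $R$. A query over $G$ is a binary relation on the roots of $G$. *)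

From mathcomp Require Import all_boot.
Set Implicit Arguments.
Unset Strict Implicit.
Unset Printing Implicit Defensive.

Inductive node (V A : Type) : Type :=
| App  of V & V
| Abs  of V
| FVar of A
| BVar of V.         (* var(l), binding edge to l *)

Arguments App {V A} _ _.
Arguments Abs {V A} _.
Arguments FVar {V A} _.
Arguments BVar {V A} _.

Definition graph (V A : Type) := V -> node V A.

Section Graphs.
Variables (V : finType) (A : Type) (G : graph V A).

Definition pre_lambda_graph : Prop :=
  (forall n l, G n = BVar l -> exists b, G l = Abs b) /\
  (forall n m a b, G n = FVar a -> G m = FVar b -> a = b -> n = m).

Inductive dir : Type := DL | DD | DR .

(* A trace d·τ (τ extended by a final step d) is represented as d :: τ. *)
Definition trace := list dir.

Inductive path (n : V) : trace -> V -> Prop :=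
| path_nil : path n nil n
| path_abs : forall tau m b, path n tau m -> G m = Abs b -> path n (DD :: tau) b
| path_appl : forall tau m m1 m2, path n tau m -> G m = App m1 m2 ->
    path n (DL :: tau) m1
| path_appr : forall tau m m1 m2, path n tau m -> G m = App m1 m2 ->
    path n (DR :: tau) m2.

Fixpoint crosses (n : V) (tau : trace) (m : V) : Prop :=
  path n tau m \/
  match tau with
  | nil => False
  | _ :: tau' => crosses n tau' m
  end.

Definition root (r : V) : Prop := forall n tau, path n tau r -> tau = nil.

Definition dominates (m n : V) : Prop :=
  forall r tau, root r -> path r tau n -> crosses r tau m.

Definition acyclic : Prop := forall n tau, path n tau n -> tau = nil.

(* Finiteness is built in: V is a finType. *)
Definition lambda_graph : Prop :=
  pre_lambda_graph /\ acyclic /\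
  (forall v l, G v = BVar l -> dominates l v).

Definition homogeneous_nodes (n m : V) : Prop :=
  match G n, G m with
  | App _ _, App _ _ | Abs _, Abs _ | FVar _, FVar _ | BVar _, BVar _ => True
  | _, _ => False
  end.

Definition homogeneous (R : V -> V -> Prop) : Prop :=
  forall n m, R n m -> homogeneous_nodes n m.

Definition propagated (R : V -> V -> Prop) : Prop :=
  (forall n m n1 n2 m1 m2, R n m -> G n = App n1 n2 -> G m = App m1 m2 ->
     R n1 m1) /\
  (forall n m b c, R n m -> G n = Abs b -> G m = Abs c -> R b c) /\
  (forall n m n1 n2 m1 m2, R n m -> G n = App n1 n2 -> G m = App m1 m2 ->
     R n2 m2).

Definition open_rel (R : V -> V -> Prop) : Prop :=
  forall n m a b, G n = FVar a -> G m = FVar b -> R n m -> n = m.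

Definition bisimulation (R : V -> V -> Prop) : Prop :=
  homogeneous R /\ propagated R /\
  (forall n m l k, R n m -> G n = BVar l -> G m = BVar k -> R l k).

Definition equivalence_rel (R : V -> V -> Prop) : Prop :=
  (forall x, R x x) /\ (forall x y, R x y -> R y x) /\
  (forall x y z, R x y -> R y z -> R x z).

Definition sharing_equivalence (R : V -> V -> Prop) : Prop :=
  open_rel R /\ bisimulation R /\ equivalence_rel R.

Definition spread (R : V -> V -> Prop) : V -> V -> Prop :=
  fun x y => forall S : V -> V -> Prop,
    propagated S -> equivalence_rel S -> (forall a b, R a b -> S a b) -> S x y.

Definition query (Q : V -> V -> Prop) : Prop :=
  forall x y, Q x y -> root x /\ root y.

End Graphs.

From Pilot Require Import Defs.
From mathcomp Require Import all_boot.
From Stdlib Require Import Relation_Operators.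
Import Defs.

(* Only the backward direction has content.  Since R is a propagated
   equivalence containing Q, Q^# is included in R, which makes Q^# open and
   homogeneous; the remaining point is closure under the binding rule.
   For that we describe Q^# concretely: it is contained in the equivalence
   closure of "x and y are reached by the same trace from Q-related roots".
   For two such bound variables x = var(l), y = var(k), dominance places l
   and k on the two paths, at depths t1 and s1; if these depths differed,
   one binder would be R-related to one of its own proper descendants, which
   is impossible in a finite acyclic graph (pigeonhole on the iterated
   descent).  Hence l and k are reached by the same trace from Q-related
   roots, so they are related by Q^#. *)

Section Paths.
Set Implicit Arguments.
Unset Strict Implicit.
Variables (V : finType) (A : Type) (G : graph V A).

Definition child (d : dir) (v : V) : option V :=
  match d, G v with
  | DL, App l _ => Some l
  | DD, Abs b => Some b
  | DR, App _ r => Some r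
  | _, _ => None
  end.

(* The node reached from v along the trace t (read right to left). *)
Fixpoint follow (v : V) (t : trace) : option V :=
  if t is d :: t' then obind (child d) (follow v t') else Some v.

Lemma pathP v t w : path G v t w <-> follow v t = Some w.
Proof.
split.
- by elim=> [|tau m b _ IH Hm|tau m m1 m2 _ IH Hm|tau m m1 m2 _ IH Hm] /=;
    rewrite ?IH /= /child ?Hm.
- elim: t w => [|d t IH] w /=; first by case=> <-; apply: path_nil.
  case Ef: (follow v t) => [m|] //=; rewrite /child.
  by case: d; case Em: (G m) => [m1 m2|b|a|l] // [<-];
    [apply: path_appl | apply: path_abs | apply: path_appr]; eauto.
Qed.

Lemma follow_cat v s t : follow v (s ++ t) = obind (follow^~ s) (follow v t).
Proof. by elim: s => [|d s IH] /=; [case: follow | rewrite IH; case: follow]. Qed.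

Lemma path_cat {v t u s w} : path G v t u -> path G u s w -> path G v (s ++ t) w.
Proof. by move=> /pathP Ht /pathP Hs; apply/pathP; rewrite follow_cat Ht. Qed.

Lemma path_split {v s t w} : path G v (s ++ t) w ->
  exists2 u, path G v t u & path G u s w.
Proof.
move/pathP; rewrite follow_cat; case Eu: (follow v t) => [u|] //= Hs.
by exists u; apply/pathP.
Qed.

Lemma path_child {v t w d w'} :
  path G v t w -> child d w = Some w' -> path G v (d :: t) w'.
Proof. by move=> /pathP Hw Hw'; apply/pathP; rewrite /= Hw. Qed.

Lemma path_det {v t w1 w2} : path G v t w1 -> path G v t w2 -> w1 = w2.
Proof. by move=> /pathP E1 /pathP; rewrite E1 => -[]. Qed.

Lemma crosses_split {r t m} : crosses G r t m ->
  exists t0 t1, t = t0 ++ t1 /\ path G r t1 m.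
Proof.
elim: t => [|d t IH] /= [H|H] //; first by exists [::], [::].
- by exists [::], (d :: t).
- by have [t0 [t1 [-> H']]] := IH H; exists (d :: t0), t1.
Qed.

Lemma suffix_of_cat {T : Type} {t0 t1 s0 s1 : seq T} : t0 ++ t1 = s0 ++ s1 ->
  size t1 <= size s1 -> exists e, s1 = e ++ t1.
Proof.
elim: s0 t0 => [|a s0 IH] [|b t0] //= E.
- by exists [::].
- by exists (b :: t0); rewrite -E.
- by rewrite E /= size_cat ltnNge leq_addl.
- by case: E => _ /IH.
Qed.

Lemma propagated_child {S : V -> V -> Prop} : propagated G S ->
  forall {d a c a' c'}, S a c -> child d a = Some a' -> child d c = Some c' -> S a' c'.
Proof.
move=> [PL [PD PR]] [] a c a' c' Sac; rewrite /child;
  case Ea: (G a) => [a1 a2|b|x|l] //; case Ec: (G c) => [c1 c2|b'|y|k] // [<-] [<-];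
  eauto.
Qed.

Lemma child_closed_propagated (S : V -> V -> Prop) :
  (forall d a c a' c', S a c -> child d a = Some a' -> child d c = Some c' -> S a' c') ->
  propagated G S.
Proof.
move=> HS; split; [|split].
- by move=> n m ? ? ? ? Snm En Em; apply: (HS DL n m _ _ Snm); rewrite /child ?En ?Em.
- by move=> n m ? ? Snm En Em; apply: (HS DD n m _ _ Snm); rewrite /child ?En ?Em.
- by move=> n m ? ? ? ? Snm En Em; apply: (HS DR n m _ _ Snm); rewrite /child ?En ?Em.
Qed.

Lemma same_trace {S : V -> V -> Prop} {r r' t a b} : propagated G S -> S r r' ->
  path G r t a -> path G r' t b -> S a b.
Proof.
move=> HS Srr /pathP + /pathP; elim: t a b => [|d t IH] a b /=; first by do 2!case=> <-.
case E1: (follow r t) => [m|] //; case E2: (follow r' t) => [m'|] //=.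
exact: propagated_child (IH _ _ E1 E2).
Qed.

Lemma transfer_child {R : V -> V -> Prop} {d a a' b} : homogeneous G R -> propagated G R ->
  R a b -> child d a = Some a' -> exists2 b', child d b = Some b' & R a' b'.
Proof.
move=> Hh HR Rab Ha.
have [b' Eb] : exists b', child d b = Some b'.
  move: Ha (Hh _ _ Rab); rewrite /child /homogeneous_nodes.
  by case: (G a) => [a1 a2|a1|x|l]; case: (G b) => [b1 b2|b1|y|k]; case: d => //;
    eexists.
by exists b'; last exact: (propagated_child HR Rab Ha Eb).
Qed.

Lemma transfer {R : V -> V -> Prop} {a b t a'} : homogeneous G R -> propagated G R -> R a b ->
  path G a t a' -> exists2 b', path G b t b' & R a' b'.
Proof.
move=> Hh HR Rab /pathP; elim: t a' => [|d t IH] a' /=.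
  by case=> <-; exists b => //; apply: path_nil.
case Ea: (follow a t) => [m|] //= Hm.
have [m' /pathP Em' Rmm'] := IH _ Ea.
have [b' Eb' Rab'] := transfer_child Hh HR Rmm' Hm.
by exists b' => //; apply/pathP; rewrite /= Em'.
Qed.

(* In a finite acyclic graph, a homogeneous propagated relation never relates
   a node to a proper descendant: otherwise the descent along e could be
   repeated forever, and two of the first #|V|+1 repetitions would end in
   the same node, closing a nonempty cycle. *)
Lemma no_related_descendant {R : V -> V -> Prop} {z w e} : acyclic G -> homogeneous G R ->
  propagated G R -> path G z e w -> R z w -> e = [::].
Proof.
move=> Hac Hh HR Hzw Rzw.
pose rep i := flatten (nseq i e).
have chain i : exists w0 w1, [/\ path G z (rep i) w0, path G w0 e w1 & R w0 w1].
  elim: i => [|i [w0 [w1 [Hz Hw Rw]]]]; first by exists z, w; split => //; apply: path_nil.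
  have [w2 Hw2 Rw2] := transfer Hh HR Rw Hw.
  by exists w1, w2; split => //; apply: path_cat Hz Hw.
pose f (i : 'I_#|V|.+1) := odflt z (follow z (rep i)).
have Hf (i : 'I_#|V|.+1) : path G z (rep i) (f i).
  by have [w0 [w1 [/pathP Hz _ _]]] := chain i; apply/pathP; rewrite /f Hz.
have /injectivePn [i [j nij Efij]] : ~~ injectiveb f.
  by apply/injectiveP => /leq_card; rewrite card_ord ltnn.
wlog lt_ij : i j nij Efij / i < j.
  move=> gen; case: (ltngtP i j) => [|ji|/val_inj eij]; first exact: gen.
  - by apply: gen (esym Efij) ji; rewrite eq_sym.
  - by rewrite eij eqxx in nij.
have rep_ji : rep j = rep (j - i) ++ rep i by rewrite /rep -flatten_cat -nseqD subnK // ltnW.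
have [u Hu Hloop] : exists2 u, path G z (rep i) u & path G u (rep (j - i)) (f j).
  by apply: path_split; rewrite -rep_ji.
rewrite (path_det Hu (Hf i)) Efij in Hloop.
move: (Hac _ _ Hloop) (lt_ij); rewrite -subn_gt0; case: (j - i) => //= k.
by rewrite /rep /=; case: (e).
Qed.
End Paths.

Section Spreading.
Set Implicit Arguments.
Unset Strict Implicit.
Variables (V : finType) (A : Type) (G : graph V A) (Q : V -> V -> Prop).

Lemma spread_least (S : V -> V -> Prop) : propagated G S -> equivalence_rel S ->
  (forall x y, Q x y -> S x y) -> forall x y, spread G Q x y -> S x y.
Proof. by move=> HS ES QS x y; apply. Qed.

Lemma spread_of_query x y : Q x y -> spread G Q x y.
Proof. by move=> Qxy S _ _; apply. Qed.

Lemma spread_propagated : propagated G (spread G Q).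
Proof.
split; [|split].
- by move=> n m ? ? ? ? Hnm En Em S HS ES QS; apply: HS.1 (Hnm S HS ES QS) En Em.
- by move=> n m ? ? Hnm En Em S HS ES QS; apply: HS.2.1 (Hnm S HS ES QS) En Em.
- by move=> n m ? ? ? ? Hnm En Em S HS ES QS; apply: HS.2.2 (Hnm S HS ES QS) En Em.
Qed.

Lemma spread_equivalence : equivalence_rel (spread G Q).
Proof.
split; [|split] => [x|x y Hxy|x y z Hxy Hyz] S PS ES QS.
- exact: ES.1.
- exact: ES.2.1 (Hxy S PS ES QS).
- exact: ES.2.2 (Hxy S PS ES QS) (Hyz S PS ES QS).
Qed.

Definition co_reached (x y : V) : Prop :=
  exists r r' t, [/\ Q r r', path G r t x & path G r' t y].

(* The equivalence closure of [co_reached], a concrete upper bound of Q^#. *)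
Definition linked : V -> V -> Prop := clos_refl_sym_trans V co_reached.

Variable R : V -> V -> Prop.
Hypotheses (HR : sharing_equivalence G R) (QR : forall x y, Q x y -> R x y).

Lemma co_reached_R x y : co_reached x y -> R x y.
Proof.
case=> r [r' [t [Qr Hx Hy]]].
by have [_ [[_ [PR _]] _]] := HR; apply: same_trace PR (QR Qr) Hx Hy.
Qed.

Lemma linked_R x y : linked x y -> R x y.
Proof.
have [_ [_ [Er [Es Et]]]] := HR.
elim=> [a b /co_reached_R|a|a b _|a b c _ Rab _ Rbc]; eauto.
Qed.

(* [linked] is propagated: a chain of co-reached nodes descends stepwise,
   the intermediate nodes having the same kind by homogeneity of R. *)
Lemma linked_propagated : propagated G linked.
Proof.
apply: child_closed_propagated => d a c + + Hac; elim: Hac.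
- move=> x y [r [r' [t [Qr Hx Hy]]]] x' y' Ex Ey; apply: rst_step.
  by exists r, r', (d :: t); split; [|exact: path_child Hx Ex|exact: path_child Hy Ey].
- by move=> x x' y' -> [->]; apply: rst_refl.
- by move=> x y _ IH x' y' Ex Ey; apply: rst_sym; apply: IH.
- move=> x y z Lxy IHxy _ IHyz x' z' Ex Ez.
  have [_ [[homR [PR _]] _]] := HR.
  have [y' Ey _] := transfer_child homR PR (linked_R Lxy) Ex.
  exact: rst_trans (IHxy _ _ Ex Ey) (IHyz _ _ Ey Ez).
Qed.

Lemma spread_linked x y : spread G Q x y -> linked x y.
Proof.
apply: (spread_least linked_propagated) => [|a b Qab].
- split; [exact: rst_refl | split; [exact: rst_sym | exact: rst_trans]].
- by apply: rst_step; exists a, b, [::]; split; try apply: path_nil.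
Qed.

(* Two R-related binders reached from R-related nodes sit at the same
   depth: an extra segment e would relate a node to a proper descendant. *)
Lemma binder_depth r r' t e l k : acyclic G -> R r r' ->
  path G r t l -> path G r' (e ++ t) k -> R l k -> e = [::].
Proof.
move=> acyclicG Rrr' Hl /path_split[u Hu Huk] Rlk.
have [_ [[homR [PR _]] [_ [Es Et]]]] := HR.
apply: (no_related_descendant acyclicG homR PR Huk).
exact: Et (Es _ _ (same_trace PR Rrr' Hl Hu)) Rlk.
Qed.

Hypotheses (lambdaG : lambda_graph G) (queryQ : query G Q).

(* The binders of co-reached bound variables are related by Q^#: by
   dominance both lie on the respective paths, and by [binder_depth] at
   the same trace from the Q-related roots. *)
Lemma co_reached_binders x y l k : co_reached x y ->
  G x = BVar l -> G y = BVar k -> spread G Q l k.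
Proof.
move=> Cxy Ex Ey.
have [_ [acyclicG dominated]] := lambdaG.
have [_ [[_ [_ bindR]] [_ [Es _]]]] := HR.
have Rlk : R l k := bindR _ _ _ _ (co_reached_R Cxy) Ex Ey.
case: Cxy => r [r' [t [Qr Hx Hy]]]; have Rrr' := QR Qr.
have [t0 [t1 [El Hl]]] := crosses_split (dominated _ _ Ex r t (queryQ Qr).1 Hx).
have [s0 [s1 [Ek Hk]]] := crosses_split (dominated _ _ Ey r' t (queryQ Qr).2 Hy).
have Et01 : t0 ++ t1 = s0 ++ s1 by rewrite -El -Ek.
have same_depth : t1 = s1.
  case: (leqP (size t1) (size s1)) => [le_ts | /ltnW le_st].
  - have [e Ee] := suffix_of_cat Et01 le_ts; rewrite Ee in Hk *.
    by rewrite (binder_depth acyclicG Rrr' Hl Hk Rlk).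
  - have [e Ee] := suffix_of_cat (esym Et01) le_st; rewrite Ee in Hl *.
    by rewrite (binder_depth acyclicG (Es _ _ Rrr') Hk Hl (Es _ _ Rlk)).
rewrite same_depth in Hl.
exact: same_trace spread_propagated (spread_of_query Qr) Hl Hk.
Qed.

Lemma linked_binders x y : linked x y ->
  forall l k, G x = BVar l -> G y = BVar k -> spread G Q l k.
Proof.
have [Er [Es Et]] := spread_equivalence.
elim=> [a b /co_reached_binders // | a l k -> [->] // |
        a b _ IH l k Ea Eb | a b c Lab IHab _ IHbc l k Ea Ec].
- exact: Es (IH _ _ Eb Ea).
- have [_ [[homR _] _]] := HR.
  move: (homR _ _ (linked_R Lab)); rewrite /homogeneous_nodes Ea.
  case Eb: (G b) => [||| m] // _.
  exact: Et (IHab _ _ Ea Eb) (IHbc _ _ Eb Ec).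
Qed.

Lemma spread_binders x y l k : spread G Q x y ->
  G x = BVar l -> G y = BVar k -> spread G Q l k.
Proof. by move/spread_linked/linked_binders; apply. Qed.
End Spreading.

Theorem mainTheorem16 (V : finType) (A : Type) (G : graph V A)
  (Q : V -> V -> Prop) :
  lambda_graph G -> query G Q ->
  (sharing_equivalence G (spread G Q) <->
   exists R : V -> V -> Prop,
     sharing_equivalence G R /\ (forall x y, Q x y -> R x y)).
Proof.
move=> lambdaG queryQ; split=> [shQ | [R [HR QR]]].
  by exists (spread G Q); split=> // x y; apply: spread_of_query.
have [openR [[homR [PR _]] ER]] := HR.
have spreadR := spread_least PR ER QR.
split; [|split; [split; [|split] | exact: spread_equivalence]].
- by move=> n m a b En Em /spreadR; apply: openR En Em.
- by move=> n m /spreadR /homR.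
- exact: spread_propagated.
- exact: spread_binders HR QR lambdaG queryQ.
Qed.
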